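(* Let $q=2^m$ with $m$ a positive integer. Let $\delta\in\mathbb{F}_{q^2}$, $b\in\mathbb{F}_q^*$, and let $i$ be a non-negative integer with $b\,\mathrm{Tr}_{q^2/q}(\delta)^{2^i+1}=1$. Then the compositional inverse of $$P(x)=b(x^q+x+\delta)^{2^i+q+1}+x$$ over $\mathbb{F}_{q^2}$ is $$P^{-1}(x)=x+b\left(\left(\mathrm{Tr}_{q^2/q}(\delta)(x^q+x)+\delta^{q+1}\right)^{q/2}+\delta\right)^{2^i+q+1}.$$
   Context: $\mathrm{Tr}_{q^2/q}(y)=y+y^q$. The compositional inverse of a permutation polynomial $f$ of $\mathbb{F}_{Q}$ is the unique polynomial $f^{-1}$ (modulo $x^Q-x$) with $f(f^{-1}(c))=f^{-1}(f(c))=c$ for all $c\in\mathbb{F}_Q$; in particular the statement includes that $P$ permutes $\mathbb{F}_{q^2}$. *)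

From HB Require Import structures.
From mathcomp Require Import all_boot all_order all_algebra all_field.
Set Implicit Arguments. Unset Strict Implicit. Unset Printing Implicit Defensive.
Import GRing.Theory.
Local Open Scope ring_scope.

(* Relative trace Tr_{q^2/q}(y) = y + y^q on a field F (intended |F| = q^2). *)
Definition trq2q (F : fieldType) (q : nat) (y : F) : F := y + y ^+ q.

Definition Ppoly (F : fieldType) (q i : nat) (b delta : F) (x : F) : F :=
  b * (x ^+ q + x + delta) ^+ (2 ^ i + q + 1) + x.

Definition Pinv (F : fieldType) (q i : nat) (b delta : F) (x : F) : F :=
  x + b * ((trq2q q delta * (x ^+ q + x) + delta ^+ (q + 1)) ^+ (q %/ 2)
            + delta) ^+ (2 ^ i + q + 1).

(* The q-Frobenius is additive and of order 2, so
   Tr is additive with q-fixed values, and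
   Tr (y^(2^i+q+1)) = Tr(y)^(2^i) y^(q+1).
   For y := Tr x + delta this gives Tr y = Tr delta =: T and
   y^(q+1) = (Tr x + delta)(Tr x + delta^q), hence, using b T^(2^i+1) = 1,
   T Tr(P x) + delta^(q+1) = (Tr x)^2. Raising it to q/2 gives back Tr x, so the
   inner expression of P^-1 at P x is y, and P^-1 (P x) = x. On a finite set a
   left inverse is a two-sided inverse. *)

From HB Require Import structures.
From mathcomp Require Import all_boot all_order all_algebra all_field.
From mathcomp Require Import ring.
Local Open Scope ring_scope.
Import GRing.Theory.

Lemma exprDn_pchar2 (F : fieldType) (n : nat) (a c : F) :
  2 \in [pchar F] -> (a + c) ^+ (2 ^ n) = a ^+ (2 ^ n) + c ^+ (2 ^ n).
Proof.
move=> char2; apply: exprDn_pchar.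
by rewrite (eq_pnat _ (pcharf_eq char2)) pnatX pnat_id.
Qed.

Section FrobeniusOfOrderTwo.

Variables (F : fieldType) (m q : nat).
Hypothesis char2 : 2 \in [pchar F].
Hypothesis m_gt0 : (0 < m)%N.
Hypothesis q_eq : q = (2 ^ m)%N.
Hypothesis exprqK : forall a : F, a ^+ q ^+ q = a.

Let two_eq0 : (2 : F) = 0. Proof. exact: pcharf0 char2. Qed.

Lemma exprqD (a c : F) : (a + c) ^+ q = a ^+ q + c ^+ q.
Proof. by rewrite q_eq exprDn_pchar2. Qed.

Lemma trq2q_exprq (a : F) : trq2q q a ^+ q = trq2q q a.
Proof. by rewrite /trq2q exprqD exprqK addrC. Qed.

Lemma trq2qD (a c : F) : trq2q q (a + c) = trq2q q a + trq2q q c.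
Proof. by rewrite /trq2q exprqD; ring. Qed.

Lemma trq2qMl (b a : F) : b ^+ q = b -> trq2q q (b * a) = b * trq2q q a.
Proof. by move=> bq; rewrite /trq2q exprMn bq mulrDr. Qed.

Lemma trq2q_fixed (s : F) : s ^+ q = s -> trq2q q s = 0.
Proof. by move=> sq; rewrite /trq2q sq addrr_pchar2. Qed.

Lemma sqr_exprq_half (a : F) : (a ^+ 2) ^+ (q %/ 2) = a ^+ q.
Proof.
rewrite -exprM; congr (_ ^+ _).
by rewrite q_eq -(prednK m_gt0) expnS mulKn.
Qed.

Lemma trq2q_expr (i : nat) (y : F) :
  trq2q q (y ^+ (2 ^ i + q + 1)) = trq2q q y ^+ (2 ^ i) * y ^+ (q + 1).
Proof.
rewrite /trq2q -exprM mulnC exprM -addnA !exprD exprDn_pchar2 //.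
by rewrite exprqK; ring.
Qed.

Variables (i : nat) (b delta : F).
Hypothesis b_fixed : b ^+ q = b.
Hypothesis b_trq2q : b * trq2q q delta ^+ (2 ^ i + 1) = 1.

Lemma trq2q_Ppoly (x : F) :
  let t := trq2q q x in
  trq2q q (Ppoly q i b delta x)
  = b * trq2q q delta ^+ (2 ^ i) * ((t + delta) * (t + delta ^+ q)) + t.
Proof.
move=> t; rewrite /Ppoly trq2qD trq2qMl // -mulrA.
rewrite [x ^+ q + x]addrC -[x + x ^+ q]/t.
have tq : t ^+ q = t by rewrite trq2q_exprq.
rewrite trq2q_expr trq2qD (trq2q_fixed _ tq) add0r.
by rewrite addn1 exprSr exprqD tq [(t + _) * _]mulrC.
Qed.

Lemma Pinv_radicand_Ppoly (x : F) :
  trq2q q delta * trq2q q (Ppoly q i b delta x) + delta ^+ (q + 1)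
  = trq2q q x ^+ 2.
Proof.
set T := trq2q q delta; set t := trq2q q x.
have bT1 : b * T ^+ (2 ^ i) * T = 1 by rewrite -mulrA -exprSr -addn1.
rewrite trq2q_Ppoly -/t mulrDr mulrA [T * _]mulrC bT1 mul1r addn1 exprSr.
by rewrite /T /trq2q; ring: two_eq0.
Qed.

Lemma PpolyK : cancel (Ppoly q i b delta) (Pinv q i b delta).
Proof.
move=> x; rewrite /Pinv [_ ^+ q + _]addrC -[_ + _ ^+ q]/(trq2q q _).
rewrite Pinv_radicand_Ppoly sqr_exprq_half trq2q_exprq.
by rewrite /Ppoly [x ^+ q + x]addrC -[x + x ^+ q]/(trq2q q x); ring: two_eq0.
Qed.

End FrobeniusOfOrderTwo.

Theorem theorem3p7 (F : finFieldType) (m : nat) (q : nat) (i : nat)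
    (b delta : F) :
  (0 < m)%N -> q = (2 ^ m)%N -> #|F| = (q ^ 2)%N ->
  b ^+ q = b -> b != 0 ->
  b * trq2q q delta ^+ (2 ^ i + 1) = 1 ->
  bijective (Ppoly q i b delta) /\
  (forall c : F, Ppoly q i b delta (Pinv q i b delta c) = c) /\
  (forall c : F, Pinv q i b delta (Ppoly q i b delta c) = c).
Proof.
move=> m_gt0 q_eq cardF b_fixed _ b_trq2q.
have char2 : 2 \in [pchar F].
  by apply: (card_finPcharP (n := (m * 2)%N)); rewrite // cardF q_eq -expnM.
have exprqK (a : F) : a ^+ q ^+ q = a by rewrite -exprM mulnn -cardF expf_card.
have PK := @PpolyK F m q char2 m_gt0 q_eq exprqK i b delta b_fixed b_trq2q.
by split; [exact: injF_bij (can_inj PK) | split; [exact: canF_sym PK |]].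
Qed.
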